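(* Let $A,B,C$ be logically independent events. Given $(x,y)\in[0,1]^2$, the assessment $P(C|A)=x$, $P(C|B)=y$, $P(C|(A\vee B))=z$ is coherent if and only if $z'\le z\le z''$, where \[ z'=\begin{cases}\dfrac{xy}{x+y-xy}, & (x,y)\neq(0,0),\\ 0, & (x,y)=(0,0),\end{cases}\qquad z''=\begin{cases}\dfrac{x+y-2xy}{1-xy}, & (x,y)\neq(1,1),\\ 1, & (x,y)=(1,1).\end{cases} \] Consequently, if $0\le\alpha_i\le\beta_i\le1$ ($i=1,2$) with $(\alpha_1,\alpha_2)\neq(0,0)$ and $(\beta_1,\beta_2)\neq(1,1)$, the set of values $z$ for which there exist $x\in[\alpha_1,\beta_1]$, $y\in[\alpha_2,\beta_2]$ making $(x,y,z)$ a coherent assessment on $(C|A,C|B,C|(A\vee B))$ is exactly $[\alpha_3,\beta_3]$ with \[ \alpha_3=\frac{\alpha_1\alpha_2}{\alpha_1+\alpha_2-\alpha_1\alpha_2},\qquad \beta_3=\frac{\beta_1+\beta_2-2\beta_1\beta_2}{1-\beta_1\beta_2}. \]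
   Context: Events are elements of a Boolean algebra; $AB$ denotes conjunction, $A\vee B$ disjunction, $A^c$ negation. $A,B,C$ are logically independent if all eight conjunctions $A^{*}B^{*}C^{*}$ (each $X^{*}\in\{X,X^c\}$) are possible (nonempty). A conditional event $E|H$ requires $H\neq\emptyset$; conditional probabilities are treated as primitive (no requirement that $P(H)>0$). Coherence (de Finetti): an assessment $(p_1,\dots,p_n)$ on conditional events $E_1|H_1,\dots,E_n|H_n$ is coherent if for every nonempty $J\subseteq\{1,\dots,n\}$ and every real numbers $s_j$ ($j\in J$), the random gain $G=\sum_{j\in J}s_j\,I_{H_j}(I_{E_j}-p_j)$ (with $I$ denoting indicator functions) satisfies $\max G\ge 0$, where the maximum is taken over the possible worlds (atoms) contained in $\bigvee_{j\in J}H_j$. *)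

From HB Require Import structures.
From mathcomp Require Import all_boot all_order all_algebra.
From mathcomp Require Import reals.
Set Implicit Arguments. Unset Strict Implicit. Unset Printing Implicit Defensive.
Import Order.TTheory GRing.Theory Num.Theory.
Local Open Scope ring_scope.

(* Events are represented as subsets (boolean predicates) of a type of
   possible worlds Omega; conjunction = predI, disjunction = predU,
   negation = predC.  (Every Boolean algebra is representable this way.) *)

Section Coh.
Variables (R : realType) (Omega : Type).

Definition ind (E : Omega -> bool) (w : Omega) : R := if E w then 1 else 0.

Definition logically_independent (A B C : Omega -> bool) : Prop :=
  forall a b c : bool, exists w : Omega, [/\ A w = a, B w = b & C w = c].

(* de Finetti coherence of p_1..p_n on E_1|H_1,...,E_n|H_n:
   for every nonempty J and real s_j (j in J), the random gain
   G = sum_{j in J} s_j I_{H_j} (I_{E_j} - p_j) has max >= 0 over the possible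
   worlds in the disjunction of the H_j (j in J).  Since G takes finitely many
   values, "max G >= 0" is "G w >= 0 for some such world w". *)
Definition coherent (n : nat) (E H : 'I_n -> Omega -> bool) (p : 'I_n -> R)
  : Prop :=
  forall J : {set 'I_n}, J != set0 ->
  forall s : 'I_n -> R,
  exists w : Omega, [exists j in J, H j w] /\
    0 <= \sum_(j in J) s j * ind (H j) w * (ind (E j) w - p j).

Definition coherent_CA_CB_CAB (A B C : Omega -> bool) (x y z : R) : Prop :=
  coherent (tnth [tuple C; C; C]) (tnth [tuple A; B; (fun w => A w || B w)])
           (tnth [tuple x; y; z]).
End Coh.

Definition zlow {R : realType} (x y : R) : R :=
  if (x == 0) && (y == 0) then 0 else x * y / (x + y - x * y).
Definition zupp {R : realType} (x y : R) : R :=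
  if (x == 1) && (y == 1) then 1 else (x + y - 2 * x * y) / (1 - x * y).

From HB Require Import structures.
From mathcomp Require Import all_boot all_order all_algebra.
From mathcomp Require Import reals.
From mathcomp Require Import ring lra.
Set Implicit Arguments. Unset Strict Implicit. Unset Printing Implicit Defensive.
Import Order.TTheory GRing.Theory Num.Theory.
Local Open Scope ring_scope.

(* Logical independence makes the eight atoms A*B*C* the only worlds that
   matter, so coherence can be decided on them.  Necessity: the bets with stakes
   (y, x, -(x+y-xy)) and (y-1, x-1, 1-xy) on (C|A, C|B, C|A v B) have, on every
   atom of A v B, a gain at most z(x+y-xy) - xy and x+y-2xy - z(1-xy)
   respectively; coherence forces both to be >= 0, which together with
   0 <= z <= 1 means z' <= z <= z''.
   Sufficiency: a gain has zero mean under any nonnegative weighting of the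
   atoms that reproduces the assessed conditional probabilities, so it is
   nonnegative somewhere on the support.  For a family J containing all three
   events we mix two distributions realising z' and z''; for smaller J one cell
   of the partition generated by A and B suffices.  The interval statement
   follows from z' <= x <= z'' and the monotonicity of z' and z''. *)

Section Witnesses.
Variables (R : realType) (T : finType) (n : nat).
Variables (E H : 'I_n -> T -> bool) (p : 'I_n -> R).

Definition balanced (w : T -> R) (j : 'I_n) : Prop :=
  \sum_t w t * ind R (H j) t * (ind R (E j) t - p j) = 0.

Definition coherence_witness (J : {set 'I_n}) (w : T -> R) : Prop :=
  [/\ forall t, 0 <= w t, {in J, forall j, balanced w j}
    & exists2 t, [exists j in J, H j t] & 0 < w t].

Lemma coherent_of_witnesses :
  (forall J : {set 'I_n}, J != set0 -> exists w, coherence_witness J w) ->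
  coherent E H p.
Proof.
move=> witness J /witness[w [w_ge0 w_bal [t0 Ht0 w_t0]]] s.
pose G t := \sum_(j in J) s j * ind R (H j) t * (ind R (E j) t - p j).
have [/existsP[t /andP[Ht Gt]] | no_t] :=
  boolP [exists t, [exists j in J, H j t] && (0 <= G t)].
  by exists t.
have G_lt0 t : [exists j in J, H j t] -> G t < 0.
  move=> Ht; rewrite ltNge; apply: contra no_t => Gt.
  by apply/existsP; exists t; rewrite Ht.
have G_eq0 t : ~~ [exists j in J, H j t] -> G t = 0.
  move=> nHt; apply: big1 => j Jj.
  suff /negbTE Hjt : ~~ H j t by rewrite /ind Hjt mulr0 mul0r.
  by apply: contra nHt => Hjt; apply/existsP; exists j; rewrite Jj.
have wG_sum : \sum_t w t * G t = 0.
  rewrite (eq_bigr (fun t => \sum_(j in J)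
    s j * (w t * ind R (H j) t * (ind R (E j) t - p j)))); last first.
    by move=> t _; rewrite mulr_sumr; apply: eq_bigr => j _; ring.
  by rewrite exchange_big big1 // => j Jj; rewrite -mulr_sumr w_bal ?mulr0.
have wG_le0 t : 0 <= - (w t * G t).
  have [Ht | nHt] := boolP [exists j in J, H j t].
    by rewrite oppr_ge0 mulr_ge0_le0 // ltW // G_lt0.
  by rewrite G_eq0 // mulr0 oppr0.
have wG_t0 : - (w t0 * G t0) = 0.
  apply: (psumr_eq0P (P := xpredT) (fun t _ => wG_le0 t)) => //.
  by rewrite sumrN wG_sum oppr0.
have : w t0 * G t0 < 0 by rewrite pmulr_rlt0 // G_lt0.
lra.
Qed.
End Witnesses.

Lemma coherent_pullback (R : realType) (Omega T : Type) (f : Omega -> T) (n : nat)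
    (E H : 'I_n -> Omega -> bool) (E' H' : 'I_n -> T -> bool) (p : 'I_n -> R) :
  (forall t, exists w, f w = t) ->
  (forall j w, E j w = E' j (f w)) -> (forall j w, H j w = H' j (f w)) ->
  coherent E H p <-> coherent E' H' p.
Proof.
move=> f_surj EE' HH'.
have gainE J s w : \sum_(j in J) s j * ind R (H j) w * (ind R (E j) w - p j) =
    \sum_(j in J) s j * ind R (H' j) (f w) * (ind R (E' j) (f w) - p j).
  by apply: eq_bigr => j _; rewrite /ind EE' HH'.
have condE J w : [exists j in J, H j w] = [exists j in J, H' j (f w)].
  by apply: eq_existsb => j; rewrite HH'.
split=> coh J J0 s; have [w [Hw Gw]] := coh J J0 s.
  by exists (f w); rewrite -condE -gainE.
by have [v fv] := f_surj w; exists v; rewrite condE gainE fv.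
Qed.

Definition atom := (bool * bool * bool)%type.
Definition atomA (t : atom) : bool := t.1.1.
Definition atomB (t : atom) : bool := t.1.2.
Definition atomC (t : atom) : bool := t.2.

Lemma coherent_CA_CB_CAB_atoms (R : realType) (Omega : Type) (A B C : Omega -> bool)
    (x y z : R) :
  logically_independent A B C ->
  coherent_CA_CB_CAB A B C x y z <-> coherent_CA_CB_CAB atomA atomB atomC x y z.
Proof.
move=> indep; apply: (coherent_pullback (f := fun w => (A w, B w, C w))).
- by move=> [[a b] c]; have [w [<- <- <-]] := indep a b c; exists w.
- by move=> [[|[|[|//]]] ?] w.
- by move=> [[|[|[|//]]] ?] w.
Qed.

Definition i0 : 'I_3 := @Ordinal 3 0 isT.
Definition i1 : 'I_3 := @Ordinal 3 1 isT.
Definition i2 : 'I_3 := @Ordinal 3 2 isT.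

Lemma ord3_ind (P : 'I_3 -> Prop) : P i0 -> P i1 -> P i2 -> forall j, P j.
Proof.
by move=> P0 P1 P2 [[|[|[|//]]] lt_j3]; rewrite (bool_irrelevance lt_j3 isT).
Qed.

Lemma sum_bool_pair (R : realType) (T : finType) (F : T * bool -> R) :
  \sum_t F t = \sum_u (F (u, true) + F (u, false)).
Proof.
rewrite (eq_bigr (fun t => F (t.1, t.2))); last by case.
rewrite -(pair_bigA _ (fun u c => F (u, c))).
by apply: eq_bigr => u _; rewrite big_bool.
Qed.

Lemma sum_atom (R : realType) (F : atom -> R) : \sum_t F t =
  F (true, true, true) + F (true, true, false) + F (true, false, true)
  + F (true, false, false) + F (false, true, true) + F (false, true, false)
  + F (false, false, true) + F (false, false, false).
Proof.
rewrite sum_bool_pair (sum_bool_pair (fun u => F (u, true) + F (u, false))).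
by rewrite big_bool /= !addrA.
Qed.

Section Atoms.
Variable R : realType.
Implicit Types (x y z q : R) (t : atom).

Local Notation Eat := (tnth [tuple atomC; atomC; atomC]).
Local Notation Hat := (tnth [tuple atomA; atomB; fun t : atom => atomA t || atomB t]).
Local Notation pat x y z := (tnth [tuple x; y; z]).

Lemma coherent_atoms_gain x y z : coherent_CA_CB_CAB atomA atomB atomC x y z ->
  forall s0 s1 s2 : R, exists2 t, atomA t || atomB t &
    0 <= s0 * ind R atomA t * (ind R atomC t - x)
         + s1 * ind R atomB t * (ind R atomC t - y)
         + s2 * ind R (fun t => atomA t || atomB t) t * (ind R atomC t - z).
Proof.
move=> coh s0 s1 s2.
have setT_neq0 : [set: 'I_3] != set0 by apply/set0Pn; exists i0; rewrite inE.
have [t [Ht Gt]] := coh _ setT_neq0 (pat s0 s1 s2).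
exists t.
  case/existsP: Ht => j; elim/ord3_ind: j => /andP[_];
  by rewrite /tnth /= => ->; rewrite ?orbT.
move: Gt; rewrite (eq_bigl xpredT) => [|j]; last by rewrite inE.
by rewrite !big_ord_recl big_ord0 addr0 /tnth /= addrA.
Qed.

Lemma coherent_atoms_bounds x y z : 0 <= x <= 1 -> 0 <= y <= 1 ->
  coherent_CA_CB_CAB atomA atomB atomC x y z ->
  [/\ 0 <= z <= 1, x * y <= z * (x + y - x * y)
    & z * (1 - x * y) <= x + y - 2 * x * y].
Proof.
move=> /andP[x0 x1] /andP[y0 y1] /coherent_atoms_gain gain.
have z0 : 0 <= z.
  by have [[[[] []] []] //= _] := gain 0 0 (-1); rewrite /ind /=; lra.
have z1 : z <= 1.
  by have [[[[] []] []] //= _] := gain 0 0 1; rewrite /ind /=; lra.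
split; first by rewrite z0 z1.
  have [[[[] []] []] //= _] := gain y x (- (x + y - x * y)); rewrite /ind /=; nra.
have [[[[] []] []] //= _] := gain (y - 1) (x - 1) (1 - x * y); rewrite /ind /=; nra.
Qed.

Definition cell_weight (u : bool * bool) q t : R :=
  if t.1 == u then (if t.2 then q else 1 - q) else 0.

Lemma cell_weight_ge0 u q : 0 <= q <= 1 -> forall t, 0 <= cell_weight u q t.
Proof.
by move=> /andP[q0 q1] t; rewrite /cell_weight; case: ifP => _; [case: ifP => _ |]; lra.
Qed.

Lemma cell_weight_pos u q : 0 <= q <= 1 -> exists c, 0 < cell_weight u q (u, c).
Proof.
move=> /andP[q0 q1]; rewrite /cell_weight /= eqxx.
by have [q_gt0 | q_le0] := ltP 0 q; [exists true | exists false; lra].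
Qed.

Lemma sum_cell_gain u q x y z j :
  \sum_t cell_weight u q t * ind R (Hat j) t * (ind R (Eat j) t - pat x y z j) =
  ind R (Hat j) (u, true) * (q - pat x y z j).
Proof.
rewrite sum_atom; case: u => [[] []]; elim/ord3_ind: j;
  rewrite /cell_weight /tnth /ind /=; ring.
Qed.

Lemma cell_witness (J : {set 'I_3}) u q i x y z :
  0 <= q <= 1 -> i \in J -> Hat i (u, true) ->
  (forall j, j \in J -> Hat j (u, true) -> q = pat x y z j) ->
  coherence_witness Eat Hat (pat x y z) J (cell_weight u q).
Proof.
move=> q01 Ji Hi qE; split; first exact: cell_weight_ge0.
  move=> j Jj; rewrite /balanced sum_cell_gain.
  case Hj: (Hat j (u, true)); last by rewrite /ind Hj mul0r.
  by rewrite -(qE j Jj Hj) subrr mulr0.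
have [c w_gt0] := cell_weight_pos u q01.
have Hc j : Hat j (u, c) = Hat j (u, true) by elim/ord3_ind: j.
by exists (u, c) => //; apply/existsP; exists i; rewrite Ji Hc.
Qed.

(* Both weightings give C|A the value x and C|B the value y; C|(A v B) gets
   z' under [low_weight] and z'' under [upp_weight], with total masses x+y-xy
   and 1-xy.  The coefficients of [mixed_weight] are chosen to hit z. *)
Definition low_weight x y t : R :=
  match t with
  | (true, true, true) => x * y
  | (true, false, false) => y * (1 - x)
  | (false, true, false) => x * (1 - y)
  | _ => 0
  end.

Definition upp_weight x y t : R :=
  match t with
  | (true, true, false) => (1 - x) * (1 - y)
  | (true, false, true) => x * (1 - y)
  | (false, true, true) => y * (1 - x)
  | _ => 0
  end.

Lemma low_weight_ge0 x y t : 0 <= x <= 1 -> 0 <= y <= 1 -> 0 <= low_weight x y t.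
Proof.
by move=> /andP[? ?] /andP[? ?]; case: t => [[[] []] []]; rewrite /= ?lexx //;
  apply: mulr_ge0; lra.
Qed.

Lemma upp_weight_ge0 x y t : 0 <= x <= 1 -> 0 <= y <= 1 -> 0 <= upp_weight x y t.
Proof.
by move=> /andP[? ?] /andP[? ?]; case: t => [[[] []] []]; rewrite /= ?lexx //;
  apply: mulr_ge0; lra.
Qed.

Definition mixed_weight x y z t : R :=
  (x + y - 2 * x * y - z * (1 - x * y)) * low_weight x y t
  + (z * (x + y - x * y) - x * y) * upp_weight x y t.

Lemma mixed_weight_balanced x y z j :
  balanced Eat Hat (pat x y z) (mixed_weight x y z) j.
Proof.
rewrite /balanced sum_atom; elim/ord3_ind: j;
  rewrite /mixed_weight /tnth /ind /=; ring.
Qed.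

Lemma sum_mixed_weight x y z :
  \sum_t mixed_weight x y z t = (x - y) ^+ 2 + 3 * (x * y * ((1 - x) * (1 - y))).
Proof. by rewrite sum_atom /mixed_weight /=; ring. Qed.

Lemma mixed_witness (J : {set 'I_3}) x y z :
  0 <= x <= 1 -> 0 <= y <= 1 ->
  x * y <= z * (x + y - x * y) -> z * (1 - x * y) <= x + y - 2 * x * y ->
  (x != y) || (0 < x < 1) -> i2 \in J ->
  coherence_witness Eat Hat (pat x y z) J (mixed_weight x y z).
Proof.
move=> x01 y01 low upp nondeg J2.
have w_ge0 t : 0 <= mixed_weight x y z t.
  by rewrite addr_ge0 // mulr_ge0 ?subr_ge0 ?low_weight_ge0 ?upp_weight_ge0.
move: x01 y01 => /andP[x0 x1] /andP[y0 y1].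
split=> // [j _|]; first exact: mixed_weight_balanced.
have sum_gt0 : 0 < \sum_t mixed_weight x y z t.
  rewrite sum_mixed_weight; have [exy | xy] := eqVneq x y.
    move: nondeg; rewrite -exy eqxx /= => /andP[x_gt0 x_lt1].
    have : 0 < x * (1 - x) by rewrite mulr_gt0 ?subr_gt0.
    nra.
  have : 0 < (x - y) ^+ 2 by rewrite lt_def sqrf_eq0 subr_eq0 xy sqr_ge0.
  have : 0 <= x * y * ((1 - x) * (1 - y)) by rewrite !mulr_ge0 ?subr_ge0.
  lra.
have [t /andP[_ w_gt0]] : exists t, true && (0 < mixed_weight x y z t).
  by apply: psumr_neq0P => //; apply/eqP; rewrite lt0r_neq0.
exists t => //; apply/existsP; exists i2; rewrite J2 /tnth /=.
by move: w_gt0; case: t => [[[] []] []]; rewrite /mixed_weight /= ?mulr0 ?addr0 ?ltxx.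
Qed.

Lemma coherent_atoms_of_bounds x y z : 0 <= x <= 1 -> 0 <= y <= 1 -> 0 <= z <= 1 ->
  x * y <= z * (x + y - x * y) -> z * (1 - x * y) <= x + y - 2 * x * y ->
  coherent_CA_CB_CAB atomA atomB atomC x y z.
Proof.
move=> x01 y01 z01 low upp; apply: coherent_of_witnesses => J /set0Pn[j Jj].
have [J2 | nJ2] := boolP (i2 \in J); last first.
  have [J0 | nJ0] := boolP (i0 \in J).
    exists (cell_weight (true, false) x); apply: (cell_witness (i := i0)) => //.
    by elim/ord3_ind => //; rewrite (negbTE nJ2).
  exists (cell_weight (false, true) y); apply: (cell_witness (i := i1)) => //.
    by move: Jj; elim/ord3_ind: j; rewrite ?(negbTE nJ0) ?(negbTE nJ2).
  by elim/ord3_ind => //; rewrite (negbTE nJ2).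
have [J1 | nJ1] := boolP (i1 \in J); last first.
  exists (cell_weight (false, true) z); apply: (cell_witness (i := i2)) => //.
  by elim/ord3_ind => //; rewrite (negbTE nJ1).
have [J0 | nJ0] := boolP (i0 \in J); last first.
  exists (cell_weight (true, false) z); apply: (cell_witness (i := i2)) => //.
  by elim/ord3_ind => //; rewrite (negbTE nJ0).
have [nondeg | deg] := boolP ((x != y) || (0 < x < 1)).
  by exists (mixed_weight x y z); apply: mixed_witness.
(* Only (x, y) = (0, 0) or (1, 1) remain, where [mixed_weight] vanishes. *)
have [-> ->] : x = z /\ y = z.
  move: deg; rewrite negb_or negbK negb_and -!leNgt => /andP[/eqP exy x_out].
  subst y; case/andP: x01 => x0 x1; case/andP: z01 => z0 z1.
  have [] : x = 0 \/ x = 1 by case/orP: x_out; [left | right]; lra.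
    by move=> x_eq0; rewrite x_eq0 in upp *; split; lra.
  by move=> x_eq1; rewrite x_eq1 in low *; split; lra.
exists (cell_weight (true, true) z); apply: (cell_witness (i := i2)) => //.
by elim/ord3_ind.
Qed.

End Atoms.

Section Bounds.
Variable R : realType.
Implicit Types x y z : R.

Lemma zlowE x y : ~ (x = 0 /\ y = 0) -> zlow x y = x * y / (x + y - x * y).
Proof.
by move=> nxy; rewrite /zlow; case: ifP => // /andP[/eqP ? /eqP ?]; case: nxy.
Qed.

Lemma zuppE x y : ~ (x = 1 /\ y = 1) -> zupp x y = (x + y - 2 * x * y) / (1 - x * y).
Proof.
by move=> nxy; rewrite /zupp; case: ifP => // /andP[/eqP ? /eqP ?]; case: nxy.
Qed.

Lemma zlowC x y : zlow x y = zlow y x.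
Proof. by rewrite /zlow andbC; case: ifP => // _; congr (_ / _); ring. Qed.

Lemma zuppC x y : zupp x y = zupp y x.
Proof. by rewrite /zupp andbC; case: ifP => // _; congr (_ / _); ring. Qed.

Section UnitSquare.
Variables x y : R.
Hypotheses (x01 : 0 <= x <= 1) (y01 : 0 <= y <= 1).

Lemma zlow_den_gt0 : ~ (x = 0 /\ y = 0) -> 0 < x + y - x * y.
Proof.
move: x01 y01 => /andP[x0 x1] /andP[y0 y1] nxy.
have [x_gt0 | x_le0] := ltP 0 x; first nra.
have y_gt0 : 0 < y.
  by rewrite lt_def y0 andbT; apply/eqP => y_eq0; apply: nxy; split; lra.
nra.
Qed.

Lemma zupp_den_gt0 : ~ (x = 1 /\ y = 1) -> 0 < 1 - x * y.
Proof.
move: x01 y01 => /andP[x0 x1] /andP[y0 y1] nxy.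
have [x_lt1 | x_ge1] := ltP x 1; first nra.
have y_lt1 : y < 1.
  by rewrite lt_def y1 andbT; apply/eqP => y_eq1; apply: nxy; split; lra.
nra.
Qed.

Lemma zlow_le z : 0 <= z -> (zlow x y <= z) = (x * y <= z * (x + y - x * y)).
Proof.
move=> z0; rewrite /zlow; case: ifP => [/andP[/eqP-> /eqP->] | nxy].
  by apply/idP/idP => _; lra.
rewrite ler_pdivrMr // zlow_den_gt0 // => -[x0 y0].
by move: nxy; rewrite x0 y0 !eqxx.
Qed.

Lemma le_zupp z : z <= 1 -> (z <= zupp x y) = (z * (1 - x * y) <= x + y - 2 * x * y).
Proof.
move=> z1; rewrite /zupp; case: ifP => [/andP[/eqP-> /eqP->] | nxy].
  by apply/idP/idP => _; lra.
rewrite ler_pdivlMr // zupp_den_gt0 // => -[x1 y1].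
by move: nxy; rewrite x1 y1 !eqxx.
Qed.

Lemma zlow_ge0 : 0 <= zlow x y.
Proof.
move: x01 y01 => /andP[x0 x1] /andP[y0 y1].
by rewrite /zlow; case: ifP => // _; apply: divr_ge0; nra.
Qed.

Lemma zupp_le1 : zupp x y <= 1.
Proof.
move: x01 y01 => /andP[x0 x1] /andP[y0 y1].
rewrite /zupp; case: ifP => // nxy.
rewrite ler_pdivrMr ?mul1r; first nra.
by apply: zupp_den_gt0 => -[x_eq1 y_eq1]; move: nxy; rewrite x_eq1 y_eq1 eqxx.
Qed.

Lemma zlow_zupp_boundsE z : zlow x y <= z <= zupp x y <->
  [/\ 0 <= z <= 1, x * y <= z * (x + y - x * y)
    & z * (1 - x * y) <= x + y - 2 * x * y].
Proof.
split=> [/andP[lz zu] | [/andP[z0 z1] low upp]].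
  have z0 := le_trans zlow_ge0 lz; have z1 := le_trans zu zupp_le1.
  by rewrite -zlow_le // -le_zupp // z0 z1.
by rewrite zlow_le // le_zupp // low upp.
Qed.

Lemma zlow_le_l : zlow x y <= x.
Proof. by move: x01 y01 => /andP[x0 x1] /andP[y0 y1]; rewrite zlow_le //; nra. Qed.

Lemma le_zupp_l : x <= zupp x y.
Proof.
move: x01 y01 => /andP[x0 x1] /andP[y0 y1]; rewrite le_zupp //.
have := mulr_ge0 y0 (sqr_ge0 (1 - x)); nra.
Qed.

End UnitSquare.

Lemma zlow_monol x x' y : 0 <= x -> x <= x' -> x' <= 1 -> 0 <= y <= 1 ->
  ~ (x = 0 /\ y = 0) -> zlow x y <= zlow x' y.
Proof.
move=> x0 xx' x'1 y01 nxy.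
have x01 : 0 <= x <= 1 by rewrite x0 (le_trans xx').
have x'01 : 0 <= x' <= 1 by rewrite x'1 (le_trans x0).
have nx'y : ~ (x' = 0 /\ y = 0) by move=> [x'_0 y_0]; apply: nxy; split=> //; lra.
rewrite (zlowE nxy) (zlowE nx'y) ler_pdivrMr ?zlow_den_gt0 //.
rewrite [X in _ <= X]mulrAC ler_pdivlMr ?zlow_den_gt0 //.
have : 0 <= y ^+ 2 * (x' - x) by rewrite mulr_ge0 ?sqr_ge0 ?subr_ge0.
nra.
Qed.

Lemma zupp_monol x x' y : 0 <= x -> x <= x' -> x' <= 1 -> 0 <= y <= 1 ->
  ~ (x' = 1 /\ y = 1) -> zupp x y <= zupp x' y.
Proof.
move=> x0 xx' x'1 y01 nx'y.
have x01 : 0 <= x <= 1 by rewrite x0 (le_trans xx').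
have x'01 : 0 <= x' <= 1 by rewrite x'1 (le_trans x0).
have nxy : ~ (x = 1 /\ y = 1) by move=> [x_1 y_1]; apply: nx'y; split=> //; lra.
rewrite (zuppE nxy) (zuppE nx'y) ler_pdivrMr ?zupp_den_gt0 //.
rewrite [X in _ <= X]mulrAC ler_pdivlMr ?zupp_den_gt0 //.
have : 0 <= (x' - x) * (1 - y) ^+ 2 by rewrite mulr_ge0 ?sqr_ge0 ?subr_ge0.
nra.
Qed.

Lemma zlow_mono a1 a2 x y :
  0 <= a1 -> a1 <= x -> x <= 1 -> 0 <= a2 -> a2 <= y -> y <= 1 ->
  ~ (a1 = 0 /\ a2 = 0) -> zlow a1 a2 <= zlow x y.
Proof.
move=> a10 a1x x1 a20 a2y y1 na.
have a201 : 0 <= a2 <= 1 by rewrite a20 (le_trans a2y).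
have x01 : 0 <= x <= 1 by rewrite x1 (le_trans a10).
apply: le_trans (zlow_monol a10 a1x x1 a201 na) _.
rewrite zlowC [zlow x y]zlowC; apply: zlow_monol => //.
by move=> [a2_0 x_0]; apply: na; split; lra.
Qed.

Lemma zupp_mono x y b1 b2 :
  0 <= x -> x <= b1 -> b1 <= 1 -> 0 <= y -> y <= b2 -> b2 <= 1 ->
  ~ (b1 = 1 /\ b2 = 1) -> zupp x y <= zupp b1 b2.
Proof.
move=> x0 xb1 b11 y0 yb2 b21 nb.
have y01 : 0 <= y <= 1 by rewrite y0 (le_trans yb2).
have b101 : 0 <= b1 <= 1 by rewrite b11 (le_trans x0).
apply: le_trans (zupp_monol x0 xb1 b11 y01 _) _.
  by move=> [b1_1 y_1]; apply: nb; split; lra.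
rewrite zuppC [zupp b1 b2]zuppC; apply: zupp_monol => //.
by move=> [b2_1 b1_1]; apply: nb.
Qed.

End Bounds.

Lemma coherent_CA_CB_CAB_iff (R : realType) (Omega : Type) (A B C : Omega -> bool)
    (x y z : R) :
  logically_independent A B C -> 0 <= x <= 1 -> 0 <= y <= 1 ->
  coherent_CA_CB_CAB A B C x y z <-> zlow x y <= z <= zupp x y.
Proof.
move=> indep x01 y01; rewrite zlow_zupp_boundsE // coherent_CA_CB_CAB_atoms //.
split; first exact: coherent_atoms_bounds.
by case=> z01 low upp; apply: coherent_atoms_of_bounds.
Qed.

Lemma coherent_CA_CB_CAB_range (R : realType) (Omega : Type) (A B C : Omega -> bool)
    (a1 b1 a2 b2 z : R) :
  logically_independent A B C ->
  0 <= a1 -> a1 <= b1 -> b1 <= 1 -> 0 <= a2 -> a2 <= b2 -> b2 <= 1 ->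
  ~ (a1 = 0 /\ a2 = 0) -> ~ (b1 = 1 /\ b2 = 1) ->
  (exists x y, [/\ a1 <= x <= b1, a2 <= y <= b2 & coherent_CA_CB_CAB A B C x y z]) <->
  zlow a1 a2 <= z <= zupp b1 b2.
Proof.
move=> indep a10 ab1 b11 a20 ab2 b21 na nb.
split=> [[x [y [/andP[a1x xb1] /andP[a2y yb2]]]] | /andP[lz zu]].
  have x01 : 0 <= x <= 1 by rewrite (le_trans a10 a1x) (le_trans xb1 b11).
  have y01 : 0 <= y <= 1 by rewrite (le_trans a20 a2y) (le_trans yb2 b21).
  move/(coherent_CA_CB_CAB_iff z indep x01 y01) => /andP[lz zu].
  case/andP: x01 y01 => x0 x1 /andP[y0 y1].
  rewrite (le_trans (zlow_mono a10 a1x x1 a20 a2y y1 na) lz).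
  exact: le_trans zu (zupp_mono x0 xb1 b11 y0 yb2 b21 nb).
have a01 : 0 <= a1 <= 1 by rewrite a10 (le_trans ab1).
have a02 : 0 <= a2 <= 1 by rewrite a20 (le_trans ab2).
have b01 : 0 <= b1 <= 1 by rewrite b11 (le_trans a10).
have b02 : 0 <= b2 <= 1 by rewrite b21 (le_trans a20).
have [z_le | z_gt] := lerP z (zupp a1 a2).
  exists a1, a2; rewrite !lexx ab1 ab2; split=> //.
  by apply/(coherent_CA_CB_CAB_iff z indep a01 a02); rewrite lz z_le.
have [le_z | lt_z] := lerP (zlow b1 b2) z.
  exists b1, b2; rewrite !lexx ab1 ab2; split=> //.
  by apply/(coherent_CA_CB_CAB_iff z indep b01 b02); rewrite le_z zu.
have a1z : a1 <= z := le_trans (le_zupp_l a01 a02) (ltW z_gt).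
have zb1 : z <= b1 := le_trans (ltW lt_z) (zlow_le_l b01 b02).
have z01 : 0 <= z <= 1 by rewrite (le_trans a10 a1z) (le_trans zb1 b11).
exists z, a2; rewrite a1z zb1 lexx ab2; split=> //.
by apply/(coherent_CA_CB_CAB_iff z indep z01 a02); rewrite zlow_le_l ?le_zupp_l.
Qed.

Theorem mainTheorem2 (R : realType) (Omega : Type) (A B C : Omega -> bool) :
  logically_independent A B C ->
  (forall x y z : R, 0 <= x <= 1 -> 0 <= y <= 1 ->
     (coherent_CA_CB_CAB A B C x y z <-> zlow x y <= z <= zupp x y))
  /\
  (forall a1 b1 a2 b2 : R,
     0 <= a1 -> a1 <= b1 -> b1 <= 1 ->
     0 <= a2 -> a2 <= b2 -> b2 <= 1 ->
     ~ (a1 = 0 /\ a2 = 0) -> ~ (b1 = 1 /\ b2 = 1) ->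
     forall z : R,
       (exists x y : R, [/\ a1 <= x <= b1, a2 <= y <= b2 &
                           coherent_CA_CB_CAB A B C x y z]) <->
       a1 * a2 / (a1 + a2 - a1 * a2) <= z <=
       (b1 + b2 - 2 * b1 * b2) / (1 - b1 * b2)).
Proof.
move=> indep; split=> [x y z | a1 b1 a2 b2 a10 ab1 b11 a20 ab2 b21 na nb z].
  exact: coherent_CA_CB_CAB_iff.
rewrite -(zlowE na) -(zuppE nb); exact: coherent_CA_CB_CAB_range.
Qed.
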